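(* Let $G$ be a graph with $n$ vertices. If $G$ admits a $B_k$-EPG representation, then it admits a $B_k$-EPG representation on a grid of size at most $4n(k+1)\times 4n(k+1)$; and if $G$ admits a Helly $B_k$-EPG representation, then it admits a Helly $B_k$-EPG representation on a grid of size at most $4n(k+1)\times 4n(k+1)$.
   Context: A grid is the set of integer points of the plane; a grid edge joins two grid points at distance $1$. A path in the grid is a sequence of distinct grid edges in which consecutive edges share exactly one grid point and non-consecutive edges share none; a bend is a pair of consecutive edges with different directions (horizontal/vertical). An EPG representation of $G$ is a family $(P_v)_{v\in V(G)}$ of grid paths such that distinct $u,v$ are adjacent iff $P_u,P_v$ share a grid edge; it is $B_k$-EPG if every path has at most $k$ bends, and Helly if every subfamily of pairwise edge-intersecting paths has a grid edge common to all its members. A grid of size $a\times b$ consists of $a$ columns and $b$ rows of grid points. *)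

From HB Require Import structures.
From mathcomp Require Import all_boot all_order all_algebra.
Set Implicit Arguments. Unset Strict Implicit. Unset Printing Implicit Defensive.
Import Order.TTheory GRing.Theory Num.Theory.

Definition point := (int * int)%type.

Definition gadj (p q : point) : bool :=
  (absz (p.1 - q.1)%R + absz (p.2 - q.2)%R == 1)%N.

(* A grid path is given by its sequence of grid points p_0, ..., p_m (m >= 1):
   consecutive points at distance 1 and all points distinct.  Its edges are
   {p_i, p_(i+1)}.  This is exactly a sequence of distinct grid edges where
   consecutive edges share exactly one point and non-consecutive ones none. *)
Definition is_gpath (s : seq point) : bool :=
  [&& (1 < size s)%N, uniq s & all (fun e => gadj e.1 e.2) (zip s (behead s))].

Definition has_edge (s : seq point) (p q : point) : bool :=
  ((p, q) \in zip s (behead s)) || ((q, p) \in zip s (behead s)).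

Definition horiz (p q : point) : bool := p.2 == q.2.

Fixpoint bends (s : seq point) : nat :=
  match s with
  | a :: ((b :: c :: _) as t) => (horiz a b != horiz b c) + bends t
  | _ => 0
  end.

Definition share_edge (s t : seq point) : Prop :=
  exists p q : point, gadj p q /\ has_edge s p q /\ has_edge t p q.

Definition BkEPG (V : finType) (E : rel V) (k : nat) (P : V -> seq point) : Prop :=
  (forall v, is_gpath (P v) /\ (bends (P v) <= k)%N) /\
  (forall u v, u != v -> (E u v <-> share_edge (P u) (P v))).

Definition helly (V : finType) (P : V -> seq point) : Prop :=
  forall S : {set V},
    (forall u v, u \in S -> v \in S -> share_edge (P u) (P v)) ->
    exists p q : point, gadj p q /\ forall u, u \in S -> has_edge (P u) p q.

Definition on_grid (a b : nat) (s : seq point) : bool :=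
  all (fun p : point => [&& (0 <= p.1)%R, (p.1 < a%:Z)%R, (0 <= p.2)%R & (p.2 < b%:Z)%R]) s.

(* A column x containing no endpoint and no bend of any path is met by every path only in
   horizontal crossings (x-1,y),(x,y),(x+1,y).  Deleting the column and shifting everything to
   its right one unit to the left merges each crossing into the single edge (x-1,y)(x,y).  This
   keeps every path a path with the same number of bends, and explicit maps between the edges
   before and after the deletion show that it preserves which paths share an edge and the
   common edges of pairwise intersecting families, hence the B_k-EPG and Helly properties.
   After translating the representation into a box, deleting such columns until none is left
   leaves at most n(k+2) columns, each carrying one of the at most k+2 endpoints and bends of
   some path; swapping the coordinates does the same for rows, and n(k+2) <= 4n(k+1). *)

From mathcomp Require Import all_boot all_order all_algebra zify.
Import Order.TTheory GRing.Theory Num.Theory.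
Set Implicit Arguments.
Unset Strict Implicit.
Unset Printing Implicit Defensive.
Local Open Scope ring_scope.

Lemma gadj_sym p q : gadj p q = gadj q p.
Proof. by rewrite /gadj; apply/eqP/eqP; lia. Qed.

Lemma gadj_vertical p q : gadj p q -> (p.1 == q.1) = ~~ horiz p q.
Proof. by rewrite /gadj /horiz => /eqP; case: (eqVneq p.2 q.2); lia. Qed.

Lemma all_zip_gadj a s : all (fun e => gadj e.1 e.2) (zip (a :: s) s) = path gadj a s.
Proof. by elim: s a => [|b s IH] a //=; rewrite IH. Qed.

Lemma is_gpath_cons a s : is_gpath (a :: s) = [&& s != [::], uniq (a :: s) & path gadj a s].
Proof. by rewrite /is_gpath /= all_zip_gadj ltnS lt0n size_eq0. Qed.

Lemma has_edge_cons2 a b s p q :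
  has_edge [:: a, b & s] p q = [|| (p, q) == (a, b), (q, p) == (a, b) | has_edge (b :: s) p q].
Proof. by rewrite /has_edge /= !in_cons -!orbA; congr orb; rewrite orbCA. Qed.

Lemma has_edge_cons a s p q : has_edge s p q -> has_edge (a :: s) p q.
Proof. by case: s => [|b s] //; rewrite has_edge_cons2 => ->; rewrite !orbT. Qed.

Definition turn (a b : point) (s : seq point) : bool :=
  if s is c :: _ then horiz a b != horiz b c else false.

Lemma bends_cons2 a b s : bends [:: a, b & s] = (turn a b s + bends (b :: s))%N.
Proof. by case: s. Qed.

Fixpoint bend_xs (s : seq point) : seq int :=
  if s is a :: ((b :: t) as s') then (if turn a b t then [:: b.1] else [::]) ++ bend_xs s'
  else [::].

Definition corner_xs (s : seq point) : seq int :=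
  if s is a :: t then a.1 :: (last a t).1 :: bend_xs s else [::].

Lemma size_bend_xs s : size (bend_xs s) = bends s.
Proof.
elim: s => [|a [|b s] IH] //.
by rewrite bends_cons2 -IH /= size_cat; case: turn.
Qed.

Lemma size_corner_xs s : (size (corner_xs s) <= bends s + 2)%N.
Proof. by case: s => [|a s] //; rewrite -size_bend_xs /= !addn2. Qed.

Lemma vertical_edge_corner a s : path gadj a s -> forall p q, (p, q) \in zip (a :: s) s ->
  ~~ horiz p q -> p.1 \in (last a s).1 :: bend_xs (a :: s).
Proof.
elim: s a => [|b s IH] a //= /andP[ab pbs] p q; rewrite in_cons.
case/orP=> [/eqP[-> ->] vab|pq vpq]; last first.
  by have := IH b pbs p q pq vpq; rewrite !in_cons mem_cat => /orP[->|->]; rewrite ?orbT.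
rewrite (eqP (_ : a.1 == b.1)) ?gadj_vertical //.
case: s IH pbs => [|c s] IH pbs; first by rewrite mem_head.
rewrite in_cons mem_cat; case: (boolP (horiz b c)) => hbc.
  by rewrite /= (negbTE vab) hbc mem_head orbT.
by have := IH b pbs b c (mem_head _ _) hbc; rewrite in_cons => /orP[->|->]; rewrite ?orbT.
Qed.

Definition edge_hom (f : point -> point -> point * point) (s t : seq point) : Prop :=
  forall p q, has_edge s p q -> has_edge t (f p q).1 (f p q).2.

Definition gadj_hom (f : point -> point -> point * point) : Prop :=
  forall p q, gadj p q -> gadj (f p q).1 (f p q).2.

Section Transfer.
Variables (V : finType) (P Q : V -> seq point) (f g : point -> point -> point * point).
Hypotheses (f_gadj : gadj_hom f) (g_gadj : gadj_hom g).
Hypothesis f_edges : forall v, edge_hom f (P v) (Q v).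
Hypothesis g_edges : forall v, edge_hom g (Q v) (P v).

Lemma share_edge_transfer u v : share_edge (Q u) (Q v) <-> share_edge (P u) (P v).
Proof.
split=> -[p [q [pq [hu hv]]]].
- by exists (g p q).1, (g p q).2; split; [exact: g_gadj | split; exact: g_edges].
- by exists (f p q).1, (f p q).2; split; [exact: f_gadj | split; exact: f_edges].
Qed.

Lemma BkEPG_transfer (E : rel V) k :
  (forall v, is_gpath (Q v) /\ (bends (Q v) <= bends (P v))%N) -> BkEPG E k P -> BkEPG E k Q.
Proof.
move=> hQ [hP hE]; split=> [v | u v uv]; last by rewrite share_edge_transfer; exact: hE.
have [? le] := hQ v; split=> //; exact: leq_trans le (proj2 (hP v)).
Qed.

Lemma helly_transfer : helly P -> helly Q.
Proof.
move=> hP S pairwise.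
have [p [q [pq common]]] :=
  hP S (fun u v hu hv => (share_edge_transfer u v).1 (pairwise u v hu hv)).
by exists (f p q).1, (f p q).2; split=> [|u /common]; [exact: f_gadj | exact: f_edges].
Qed.
End Transfer.

Section ColumnDeletion.
Variable x : int.

Definition col_shift (p : point) : point := if x < p.1 then (p.1 - 1, p.2) else p.
Definition col_unshift (p : point) : point := if x <= p.1 then (p.1 + 1, p.2) else p.
Definition del_col (s : seq point) : seq point := map col_shift [seq p <- s | p.1 != x].

(* Both edges of a crossing of column x at height y become this edge after the deletion. *)
Definition merged_edge (y : int) : point * point := ((x - 1, y), (x, y)).

Definition del_edge (p q : point) : point * point :=
  if (p.1 == x) || (q.1 == x) then merged_edge p.2 else (col_shift p, col_shift q).

(* A merged edge comes from a crossing, whose right half ((x,y),(x+1,y)) is an edge of the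
   original path. *)
Definition undel_edge (p q : point) : point * point :=
  if ((p, q) == merged_edge p.2) || ((q, p) == merged_edge p.2) then ((x, p.2), (x + 1, p.2))
  else (col_unshift p, col_unshift q).

Definition crossing (a b c : point) : bool :=
  [&& b.1 == x, a.2 == b.2, c.2 == b.2 &
      ((a.1 == x - 1) && (c.1 == x + 1)) || ((a.1 == x + 1) && (c.1 == x - 1))].

(* Every point of s on column x, except possibly the first, is the middle of a crossing, and the
   last point is off the column. *)
Fixpoint transverse (s : seq point) : bool :=
  if s is a :: t then
    if t is b :: t' then
      (if t' is c :: _ then (b.1 == x) ==> crossing a b c else b.1 != x) && transverse t
    else true
  else true.

Lemma col_shift2 p : (col_shift p).2 = p.2.
Proof. by rewrite /col_shift; case: ifP. Qed.

Lemma horiz_col_shift p q : horiz (col_shift p) (col_shift q) = horiz p q.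
Proof. by rewrite /horiz !col_shift2. Qed.

Lemma col_shiftK p : p.1 != x -> col_unshift (col_shift p) = p.
Proof.
case: p => p1 p2 /= /eqP hp; rewrite /col_shift /=.
by case: ifP => h1; rewrite /col_unshift /=; case: ifP => h2 //; congr pair; lia.
Qed.

Lemma col_shift_inj p q : p.1 != x -> q.1 != x -> col_shift p = col_shift q -> p = q.
Proof. by move=> hp hq e; rewrite -(col_shiftK hp) -(col_shiftK hq) e. Qed.

Lemma gadj_col_shift p q : p.1 != x -> q.1 != x -> gadj p q -> gadj (col_shift p) (col_shift q).
Proof.
case: p q => [p1 p2] [q1 q2]; rewrite /gadj /col_shift /= => /eqP hp /eqP hq /eqP pq.
by case: ifP => h1; case: ifP => h2; apply/eqP => /=; lia.
Qed.

Lemma col_shift_left y : col_shift (x - 1, y) = (x - 1, y).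
Proof. by rewrite /col_shift /=; case: ifP => //; lia. Qed.

Lemma col_shift_right y : col_shift (x + 1, y) = (x, y).
Proof. by rewrite /col_shift /= addrK; case: ifP => //; lia. Qed.

Lemma gadj_merged_edge y : gadj (merged_edge y).1 (merged_edge y).2.
Proof. by rewrite /gadj /=; apply/eqP; lia. Qed.

Lemma del_col_cons a s :
  del_col (a :: s) = if a.1 == x then del_col s else col_shift a :: del_col s.
Proof. by rewrite /del_col /=; case: eqP. Qed.

Lemma del_col_uniq s : uniq s -> uniq (del_col s).
Proof.
move=> us; rewrite map_inj_in_uniq ?filter_uniq // => p q.
rewrite !mem_filter => /andP[hp _] /andP[hq _]; exact: col_shift_inj.
Qed.

Lemma del_col_neq_nil s p : p \in s -> p.1 != x -> del_col s != [::].
Proof.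
move=> ps px; have : col_shift p \in del_col s by rewrite map_f // mem_filter px.
by case: (del_col s).
Qed.

Lemma crossingP a b c : crossing a b c ->
  exists2 y, b = (x, y) & (a, c) = ((x - 1, y), (x + 1, y)) \/ (a, c) = ((x + 1, y), (x - 1, y)).
Proof.
case: a b c => [a1 a2] [b1 b2] [c1 c2] /and4P[/= /eqP -> /eqP -> /eqP ->].
by case/orP=> /andP[/eqP -> /eqP ->]; exists b2; by [|left|right].
Qed.

Lemma crossing_of a b c : gadj a b -> gadj b c -> horiz a b -> horiz b c -> a != c -> b.1 == x ->
  crossing a b c.
Proof.
case: a b c => [a1 a2] [b1 b2] [c1 c2]; rewrite /gadj /horiz /crossing /=.
move=> /eqP ab /eqP bc /eqP e1 /eqP e2 ac /eqP hb; subst.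
have : a1 != c1 by apply: contraNneq ac => ->.
lia.
Qed.

Lemma crossing_mid a b c : crossing a b c -> b.1 == x.
Proof. by case/andP. Qed.

Lemma crossing_sides a b c : crossing a b c -> (a.1 != x) && (c.1 != x).
Proof. by case/crossingP=> y _ [[-> ->]|[-> ->]]; apply/andP; split; apply/eqP => /=; lia. Qed.

Lemma crossing_horiz a b c : crossing a b c -> [&& horiz a b, horiz b c & horiz a c].
Proof. by case/crossingP=> y -> [[-> ->]|[-> ->]]; rewrite /horiz /= eqxx. Qed.

Lemma crossing_col_shift a b c : crossing a b c ->
  (col_shift a, col_shift c) = merged_edge b.2 \/ (col_shift c, col_shift a) = merged_edge b.2.
Proof.
by case/crossingP=> y -> [[-> ->]|[-> ->]]; rewrite col_shift_left col_shift_right; [left|right].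
Qed.

Lemma transverse_ind (Q : point -> seq point -> Prop) :
  (forall a, a.1 != x -> Q a [::]) ->
  (forall a b s, a.1 != x -> gadj a b -> b.1 != x -> path gadj b s -> transverse (b :: s) ->
     Q b s -> Q a (b :: s)) ->
  (forall a b c s, crossing a b c -> c.1 != x -> path gadj c s -> transverse (c :: s) ->
     Q c s -> Q a [:: b, c & s]) ->
  forall a s, a.1 != x -> path gadj a s -> transverse (a :: s) -> Q a s.
Proof.
move=> Qnil Qstep Qcross a s.
elim: {s}(size s).+1 {-2}s (ltnSn (size s)) a => // n IH [|b s] hs a ha.
  by move=> *; exact: Qnil.
move=> /= /andP[ab pbs] /andP[hb tbs].
case: (boolP (b.1 == x)) => bx; last by apply: Qstep => //; apply: IH.
case: s hs pbs hb tbs => [|c s] hs; first by rewrite bx.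
move=> /= /andP[_ pcs] /implyP/(_ bx) cr /andP[_ tcs].
have /andP[_ cx] := crossing_sides cr.
by apply: Qcross => //; apply: IH => //=; rewrite -ltnS ltnW.
Qed.

Lemma has_edge_crossing a b c s p q : crossing a b c -> has_edge [:: a, b, c & s] p q ->
  del_edge p q = merged_edge b.2 \/ has_edge (c :: s) p q.
Proof.
move=> cr; have bx := crossing_mid cr; have /and4P[_ /eqP ab /eqP cb _] := cr.
rewrite !has_edge_cons2 => /or3P[||/or3P[||->]]; last by right.
all: by move=> /eqP[-> ->]; left; rewrite /del_edge bx ?orbT ?ab ?cb.
Qed.

Lemma turn_del_col a b s : transverse (b :: s) ->
  turn (col_shift a) (col_shift b) (del_col s) = turn a b s.
Proof.
case: s => [|c s] //= /andP[hc _]; case: (boolP (c.1 == x)) => cx; last first.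
  by rewrite del_col_cons (negPf cx) /= !horiz_col_shift.
case: s hc => [|d s]; first by rewrite cx.
move=> /implyP/(_ cx) cr; have /andP[_ dx] := crossing_sides cr.
have /and3P[bc _ bd] := crossing_horiz cr.
by rewrite !del_col_cons cx (negPf dx) /= !horiz_col_shift bc bd.
Qed.

Lemma path_del_col a s : a.1 != x -> path gadj a s -> transverse (a :: s) ->
  path gadj (col_shift a) (del_col s).
Proof.
move: a s; apply: transverse_ind => [//|a b s ha ab hb _ _ IH|a b c s cr hc _ _ IH].
  by rewrite del_col_cons (negPf hb) /= gadj_col_shift.
rewrite !del_col_cons (crossing_mid cr) (negPf hc) /= IH andbT.
by case: (crossing_col_shift cr) => -[-> ->]; last rewrite gadj_sym; apply: gadj_merged_edge.
Qed.

Lemma bends_del_col a s : a.1 != x -> path gadj a s -> transverse (a :: s) ->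
  bends (col_shift a :: del_col s) = bends (a :: s).
Proof.
move: a s; apply: transverse_ind => [//|a b s _ _ hb _ tbs IH|a b c s cr hc _ tcs IH].
  by rewrite del_col_cons (negPf hb) !bends_cons2 IH turn_del_col.
rewrite !del_col_cons (crossing_mid cr) (negPf hc) !bends_cons2 IH turn_del_col //.
have /and3P[ab bc ac] := crossing_horiz cr.
rewrite [turn a b _]/turn ab bc add0n.
by case: s {IH tcs} => [|d s] //=; rewrite ac bc.
Qed.

Lemma del_col_edge_hom a s : a.1 != x -> path gadj a s -> transverse (a :: s) ->
  edge_hom del_edge (a :: s) (col_shift a :: del_col s).
Proof.
move: a s; apply: transverse_ind => [//|a b s ha _ hb _ _ IH|a b c s cr hc _ _ IH] p q.
  rewrite del_col_cons (negPf hb) !has_edge_cons2.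
  case/or3P=> [/eqP[-> ->]|/eqP[-> ->]|/IH ->]; rewrite ?orbT //.
  - by rewrite /del_edge (negPf ha) (negPf hb) eqxx.
  - by rewrite /del_edge (negPf ha) (negPf hb) eqxx orbT.
rewrite !del_col_cons (crossing_mid cr) (negPf hc).
case/(has_edge_crossing cr) => [->|/IH/has_edge_cons //].
case: (crossing_col_shift cr); rewrite /merged_edge => -[<- <-].
  by rewrite has_edge_cons2 eqxx.
by rewrite has_edge_cons2 eqxx orbT.
Qed.

Lemma undel_edge_col_shift a b : a.1 != x -> b.1 != x -> gadj a b ->
  undel_edge (col_shift a) (col_shift b) = (a, b).
Proof.
move=> ha hb ab; rewrite /undel_edge; case: ifP => [|_]; last by rewrite !col_shiftK.
case: a b ha hb ab => [a1 a2] [b1 b2]; rewrite /gadj /col_shift /merged_edge /=.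
by move=> /eqP ha /eqP hb /eqP ab; case: ifP => h1; case: ifP => h2 /=; rewrite !xpair_eqE; lia.
Qed.

Lemma undel_col_edge_hom a s : a.1 != x -> path gadj a s -> transverse (a :: s) ->
  edge_hom undel_edge (col_shift a :: del_col s) (a :: s).
Proof.
move: a s; apply: transverse_ind => [//|a b s ha ab hb _ _ IH|a b c s cr hc _ _ IH] p q.
  rewrite del_col_cons (negPf hb) has_edge_cons2.
  case/or3P=> [/eqP[-> ->]|/eqP[-> ->]|/IH/has_edge_cons //].
  - by rewrite undel_edge_col_shift // has_edge_cons2 eqxx.
  - by rewrite undel_edge_col_shift // 1?gadj_sym // has_edge_cons2 eqxx orbT.
rewrite !del_col_cons (crossing_mid cr) (negPf hc) has_edge_cons2.
case/or3P=> [/eqP[-> ->]|/eqP[-> ->]|/IH/has_edge_cons/has_edge_cons //].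
all: case/crossingP: cr => y -> [[-> ->]|[-> ->]]; rewrite col_shift_left col_shift_right.
all: by rewrite /undel_edge /merged_edge /= !eqxx ?orbT /= !has_edge_cons2 !eqxx ?orbT.
Qed.

Lemma gadj_del_edge : gadj_hom del_edge.
Proof.
move=> p q pq; rewrite /del_edge; case: ifP => [_|/norP[hp hq]].
  exact: gadj_merged_edge.
exact: gadj_col_shift.
Qed.

Lemma gadj_undel_edge : gadj_hom undel_edge.
Proof.
move=> [p1 p2] [q1 q2]; rewrite /undel_edge /merged_edge /col_unshift /gadj /= !xpair_eqE.
move=> /eqP pq.
by case: ifP => h; [|case: ifP => h1; case: ifP => h2]; apply/eqP => /=; lia.
Qed.

Lemma transverse_of a s : path gadj a s -> uniq (a :: s) ->
  (forall p q, (p, q) \in zip (a :: s) s -> ~~ horiz p q -> p.1 != x) -> (last a s).1 != x ->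
  transverse (a :: s).
Proof.
elim: s a => [|b s IH] a //= /andP[ab pbs] /andP[na ubs] hv hl.
apply/andP; split; last by apply: IH => // p q pq; apply: hv; rewrite in_cons pq orbT.
case: s {IH} pbs na ubs hv hl => [|c s] //= /andP[bc _] na _ hv _.
apply/implyP => bx; apply: crossing_of => //.
- apply/negPn/negP => vab; have e : a.1 == b.1 by rewrite gadj_vertical.
  by have := hv a b (mem_head _ _) vab; rewrite (eqP e) bx.
- apply/negPn/negP => vbc.
  have bc_edge : (b, c) \in zip [:: a, b, c & s] [:: b, c & s] by rewrite !inE eqxx orbT.
  by have := hv b c bc_edge vbc; rewrite bx.
by apply: contraNneq na => ->; rewrite !inE eqxx orbT.
Qed.

Lemma del_col_gpath s : is_gpath s -> x \notin corner_xs s ->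
  [/\ is_gpath (del_col s), bends (del_col s) = bends s,
      edge_hom del_edge s (del_col s) & edge_hom undel_edge (del_col s) s].
Proof.
case: s => [//|a s]; rewrite is_gpath_cons => /and3P[sn u pas] hx.
have ax : a.1 != x by apply: contraNneq hx => <-; rewrite mem_head.
have lx : (last a s).1 != x by apply: contraNneq hx => <-; rewrite !inE eqxx orbT.
have tr : transverse (a :: s).
  apply: transverse_of => // p q pq vpq; apply: contraNneq hx => <-.
  by rewrite /corner_xs in_cons (vertical_edge_corner pas pq vpq) orbT.
have dE : del_col (a :: s) = col_shift a :: del_col s by rewrite del_col_cons (negPf ax).
rewrite dE is_gpath_cons -dE del_col_uniq // dE path_del_col // bends_del_col // !andbT.
split=> //; last exact: undel_col_edge_hom.
  apply: (del_col_neq_nil _ lx).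
  by case: s sn {pas u tr dE hx lx} => // b t _; rewrite /= mem_last.
exact: del_col_edge_hom.
Qed.

Lemma del_col_family (V : finType) (E : rel V) k (P : V -> seq point) :
  (forall v, x \notin corner_xs (P v)) -> BkEPG E k P ->
  BkEPG E k (fun v => del_col (P v)) /\ (helly P -> helly (fun v => del_col (P v))).
Proof.
move=> hx hP; have D v := del_col_gpath (proj1 (proj1 hP v)) (hx v).
have f_edges v : edge_hom del_edge (P v) (del_col (P v)) by case: (D v).
have g_edges v : edge_hom undel_edge (del_col (P v)) (P v) by case: (D v).
split; last exact: helly_transfer gadj_del_edge gadj_undel_edge f_edges g_edges.
apply: (BkEPG_transfer gadj_del_edge gadj_undel_edge f_edges g_edges) hP => v.
by case: (D v) => ? -> _ _.
Qed.

End ColumnDeletion.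

Section GridMap.
Variables (F F' : point -> point) (flip : bool).
Hypotheses (FK : cancel F F') (F'K : cancel F' F).
Hypothesis F_gadj : forall p q, gadj (F p) (F q) = gadj p q.
Hypothesis F_horiz : forall p q, gadj p q -> horiz (F p) (F q) = horiz p q (+) flip.

Lemma path_gadj_map a s : path gadj (F a) (map F s) = path gadj a s.
Proof. by rewrite path_map; apply: eq_path => p q; exact: F_gadj. Qed.

Lemma bends_map a s : path gadj a s -> bends (map F (a :: s)) = bends (a :: s).
Proof.
elim: s a => [|b s IH] a // /andP[ab pbs].
rewrite map_cons map_cons !bends_cons2 -map_cons IH //; congr addn.
case: s pbs {IH} => [|c s] //= /andP[bc _].
by rewrite !F_horiz //; case: flip; case: horiz; case: horiz.
Qed.

Lemma has_edge_map s p q : has_edge (map F s) (F p) (F q) = has_edge s p q.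
Proof.
elim: s => [|a [|b s] IH] //.
by rewrite !map_cons has_edge_cons2 -map_cons IH has_edge_cons2 !xpair_eqE !(can_eq FK).
Qed.

Lemma map_family (V : finType) (E : rel V) k (P : V -> seq point) : BkEPG E k P ->
  BkEPG E k (fun v => map F (P v)) /\ (helly P -> helly (fun v => map F (P v))).
Proof.
pose f p q := (F p, F q); pose g p q := (F' p, F' q).
have f_gadj : gadj_hom f by move=> p q; rewrite /= F_gadj.
have g_gadj : gadj_hom g by move=> p q pq /=; rewrite -F_gadj !F'K.
have f_edges v : edge_hom f (P v) (map F (P v)) by move=> p q; rewrite /= has_edge_map.
have g_edges v : edge_hom g (map F (P v)) (P v) by move=> p q e /=; rewrite -has_edge_map !F'K.
move=> hP; split; last exact: helly_transfer f_gadj g_gadj f_edges g_edges.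
apply: (BkEPG_transfer f_gadj g_gadj f_edges g_edges) (hP) => v.
case: (P v) (proj1 (proj1 hP v)) => [//|a s]; rewrite is_gpath_cons => /and3P[sn u pas].
rewrite bends_map // map_cons is_gpath_cons -map_cons (map_inj_uniq (can_inj FK)) u.
by rewrite path_gadj_map pas; case: s sn {u pas}.
Qed.
End GridMap.

Definition translate (c : int) (p : point) : point := (p.1 + c, p.2 + c).

Lemma translateK c : cancel (translate c) (translate (- c)).
Proof. by case=> p1 p2; rewrite /translate /= !addrK. Qed.

Lemma translateNK c : cancel (translate (- c)) (translate c).
Proof. by case=> p1 p2; rewrite /translate /= !addrNK. Qed.

Lemma gadj_translate c p q : gadj (translate c p) (translate c q) = gadj p q.
Proof. by rewrite /gadj /= !opprD !(addrACA _ c) !subrr !addr0. Qed.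

Lemma horiz_translate c p q : horiz (translate c p) (translate c q) = horiz p q (+) false.
Proof. by rewrite /horiz /= (inj_eq (addIr c)) addbF. Qed.

Definition swap_xy (p : point) : point := (p.2, p.1).

Lemma swap_xyK : involutive swap_xy.
Proof. by case. Qed.

Lemma gadj_swap_xy p q : gadj (swap_xy p) (swap_xy q) = gadj p q.
Proof. by rewrite /gadj /= addnC. Qed.

Lemma horiz_swap_xy p q : gadj p q -> horiz (swap_xy p) (swap_xy q) = horiz p q (+) true.
Proof. by move=> pq; rewrite addbT -gadj_vertical. Qed.

Lemma on_grid_swap_xy a b s : on_grid a b (map swap_xy s) = on_grid b a s.
Proof.
rewrite /on_grid all_map; apply: eq_all => p /=.
by case: (0 <= p.1); case: (0 <= p.2); case: (p.1 < _); case: (p.2 < _).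
Qed.

Lemma on_grid_translate (V : finType) (P : V -> seq point) :
  exists c : nat, forall v, on_grid (c + c).+1 (c + c).+1 (map (translate c%:Z) (P v)).
Proof.
pose M := (\max_v \max_(p <- P v) maxn `|p.1| `|p.2|)%N.
exists M => v; rewrite /on_grid all_map; apply/allP => p pv.
have : (maxn `|p.1| `|p.2| <= M)%N by apply: leq_trans (leq_bigmax v); apply: leq_bigmax_seq.
by clearbody M; case: p {pv} => p1 p2 /=; rewrite geq_max; lia.
Qed.

Lemma on_grid_del_col W B (i : 'I_W.+1) s : on_grid W.+1 B s -> on_grid W B (del_col i s).
Proof.
have := ltn_ord i; rewrite /on_grid /del_col all_map all_filter => iW /allP hs.
by apply/allP => -[p1 p2] /hs /=; rewrite /col_shift /=; case: ifP => h /=; lia.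
Qed.

Section Compression.
Variables (V : finType) (E : rel V) (k : nat).

Lemma corner_cols_bound W (P : V -> seq point) : (forall v, (bends (P v) <= k)%N) ->
  (forall i : 'I_W, exists v, i%:Z \in corner_xs (P v)) -> (W <= #|V| * (k + 2))%N.
Proof.
move=> hk full; pose C := flatten [seq corner_xs (P v) | v <- enum V].
have sizeC : (size C <= #|V| * (k + 2))%N.
  rewrite size_flatten sumnE /shape !big_map -enumT big_enum /= -sum_nat_const.
  by apply: leq_sum => v _; apply: leq_trans (size_corner_xs _) _; rewrite leq_add2r hk.
apply: leq_trans sizeC.
rewrite -[W in (W <= _)%N](size_enum_ord W) -(size_map (fun i : 'I_W => i%:Z)).
apply: uniq_leq_size => [|_ /mapP[i _ ->]].
  by rewrite map_inj_uniq ?enum_uniq // => i j [] /val_inj.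
have [v hv] := full i; apply/flatten_mapP; exists v => //; exact: mem_enum.
Qed.

Lemma compress_cols W B (P : V -> seq point) : BkEPG E k P -> (forall v, on_grid W B (P v)) ->
  exists P', [/\ BkEPG E k P', helly P -> helly P' &
    exists2 W', (W' <= #|V| * (k + 2))%N & forall v, on_grid W' B (P' v)].
Proof.
elim: W P => [|W IH] P hP hg; first by exists P; split => //; exists 0%N.
case: (boolP [exists i : 'I_W.+1, [forall v, i%:Z \notin corner_xs (P v)]]).
  case/existsP=> i /forallP free; have [hP' hH'] := del_col_family free hP.
  have [P' [hP'' hH'' hW]] := IH _ hP' (fun v => on_grid_del_col i (hg v)).
  by exists P'; split=> // /hH'/hH''.
move=> /existsPn full; exists P; split=> //; exists W.+1 => //.
apply: corner_cols_bound (fun v => proj2 (proj1 hP v)) _ => i.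
by have /forallPn[v] := full i; rewrite negbK; exists v.
Qed.

Lemma small_grid_family (P : V -> seq point) : BkEPG E k P ->
  exists P', [/\ BkEPG E k P', helly P -> helly P' &
    exists a b, [/\ (a <= #|V| * (k + 2))%N, (b <= #|V| * (k + 2))%N &
                    forall v, on_grid a b (P' v)]].
Proof.
move=> hP; have [c hc] := on_grid_translate P.
have [hP0 hH0] := map_family (translateK c%:Z) (translateNK c%:Z) (gadj_translate c%:Z)
  (fun p q _ => horiz_translate c%:Z p q) hP.
have [P1 [hP1 hH1 [W1 hW1 hg1]]] := compress_cols hP0 hc.
have [hP2 hH2] := map_family swap_xyK swap_xyK gadj_swap_xy horiz_swap_xy hP1.
have hg2 v : on_grid (c + c).+1 W1 (map swap_xy (P1 v)) by rewrite on_grid_swap_xy.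
have [P3 [hP3 hH3 [W2 hW2 hg3]]] := compress_cols hP2 hg2.
have [hP4 hH4] := map_family swap_xyK swap_xyK gadj_swap_xy horiz_swap_xy hP3.
exists (fun v => map swap_xy (P3 v)); split=> //; first by move=> /hH0/hH1/hH2/hH3/hH4.
by exists W1, W2; split=> // v; rewrite on_grid_swap_xy.
Qed.
End Compression.

Theorem lemma3p4 (V : finType) (E : rel V) (n k : nat) :
  symmetric E -> irreflexive E -> #|V| = n ->
  ((exists P, BkEPG E k P) ->
     exists P, BkEPG E k P /\
       exists a b, (a <= 4 * n * (k + 1))%N /\ (b <= 4 * n * (k + 1))%N /\
                   forall v, on_grid a b (P v)) /\
  ((exists P, BkEPG E k P /\ helly P) ->
     exists P, BkEPG E k P /\ helly P /\
       exists a b, (a <= 4 * n * (k + 1))%N /\ (b <= 4 * n * (k + 1))%N /\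
                   forall v, on_grid a b (P v)).
Proof.
move=> _ _ card_V.
have le_bound : (#|V| * (k + 2) <= 4 * n * (k + 1))%N by rewrite card_V; nia.
have small P : BkEPG E k P -> exists P', [/\ BkEPG E k P', helly P -> helly P' &
    exists a b, (a <= 4 * n * (k + 1))%N /\ (b <= 4 * n * (k + 1))%N /\
                forall v, on_grid a b (P' v)].
  move=> /small_grid_family[P' [hP' hH' [a [b [ha hb hg]]]]].
  by exists P'; split=> //; exists a, b; rewrite (leq_trans ha) ?(leq_trans hb).
split=> [[P /small[P' [? _ ?]]]|[P [/small[P' [? hH' ?]] /hH' ?]]]; by exists P'.
Qed.
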